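(* For any history $\mathcal{F}_{t-1}$, conditioned on the event $E^f(t)$, \[ \mathbb{P}\big(\mathbf{x}_t\in\mathcal{X}\setminus S_t\mid\mathcal{F}_{t-1}\big)\ge p-1/t^2,\qquad p=\frac{1}{4e\sqrt{\pi}}. \]
   Context: $\mathcal{X}$ is a finite subset of the unit ball of $\mathbb{R}^d$; $f\sim\mathcal{GP}(0,k)$ with $k$ the NTK; observations $y=f(\mathbf{x})+\zeta$, $\zeta\sim\mathcal{N}(0,\sigma^2)$. Queries indexed sequentially; $\mathrm{fb}[t]$ is the largest index whose observation is available when $\mathbf{x}_t$ is chosen ($t-\mathrm{fb}[t]\le B$). $\mu_{\mathrm{fb}[t]},\sigma_{\mathrm{fb}[t]}$: GP posterior mean/std given observations $1,\dots,\mathrm{fb}[t]$; $\mathcal{F}_{t-1}$ the collected inputs/outputs plus pending inputs $\mathbf{x}_{\mathrm{fb}[t]+1},\dots,\mathbf{x}_{t-1}$. $\beta_t=2\log(\pi^2t^2|\mathcal{X}|/(3\delta))$, $c_t=\beta_t(1+\sqrt{2\log(|\mathcal{X}|t^2)})$. Given $\mathcal{F}_{t-1}$, $f_t\sim\mathcal{GP}(\mu_{\mathrm{fb}[t]},\beta_t^2\sigma^2_{\mathrm{fb}[t]})$ and $\mathbf{x}_t=\arg\max_{\mathbf{x}\in\mathcal{X}}f_t(\mathbf{x})$. $E^f(t)$: $|\mu_{\mathrm{fb}[t]}(\mathbf{x})-f(\mathbf{x})|\le\beta_t\sigma_{\mathrm{fb}[t]}(\mathbf{x})$ for all $\mathbf{x}$.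 With $\mathbf{x}^*$ a maximizer of $f$ and $\Delta(\mathbf{x})=f(\mathbf{x}^* )-f(\mathbf{x})$, the saturated set is $S_t=\{\mathbf{x}\in\mathcal{X}:\Delta(\mathbf{x})>c_t\sigma_{\mathrm{fb}[t]}(\mathbf{x})\}$. *)

From HB Require Import structures.
From mathcomp Require Import all_boot all_order all_algebra.
From mathcomp Require Import all_classical all_reals all_analysis.
Set Implicit Arguments. Unset Strict Implicit. Unset Printing Implicit Defensive.
Import Order.TTheory GRing.Theory Num.Theory.
Local Open Scope classical_set_scope.
Local Open Scope ring_scope.

Section GPdefs.
Variables (R : realType) (T : finType).

Definition psd_kernel (k : T -> T -> R) : Prop :=
  (forall x y, k x y = k y x) /\
  (forall w : T -> R, 0 <= \sum_x \sum_y w x * k x y * w y).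

Definition gram (k : T -> T -> R) (s2 : R) n (xs : 'I_n -> T) : 'M[R]_n :=
  \matrix_(i, j) k (xs i) (xs j) + s2%:M.
Definition kvec (k : T -> T -> R) n (xs : 'I_n -> T) (x : T) : 'rV[R]_n :=
  \row_i k x (xs i).

Definition post_mean k s2 n (xs : 'I_n -> T) (ys : 'I_n -> R) (x : T) : R :=
  (kvec k xs x *m invmx (gram k s2 xs) *m (\col_i ys i)) 0 0.
Definition post_cov k s2 n (xs : 'I_n -> T) (x y : T) : R :=
  k x y - (kvec k xs x *m invmx (gram k s2 xs) *m (kvec k xs y)^T) 0 0.
Definition post_sd k s2 n (xs : 'I_n -> T) (x : T) : R :=
  Num.sqrt (post_cov k s2 xs x x).

Definition beta_t (t : nat) (delta : R) : R :=
  2 * ln (pi ^+ 2 * (t%:R) ^+ 2 * #|T|%:R / (3 * delta)).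
Definition c_t (t : nat) (delta : R) : R :=
  beta_t t delta * (1 + Num.sqrt (2 * ln (#|T|%:R * (t%:R) ^+ 2))).

Definition p_const : R := (4 * expR 1 * Num.sqrt pi)^-1.
End GPdefs.

Definition gauss_law {R : realType} (m v : R) (A : set R) : \bar R :=
  if 0 < v then normal_prob m (Num.sqrt v) A else \d_m A.

(* F : Omega -> (T -> R) is a Gaussian random vector (= a GP on the finite
   set T) with mean m and covariance C: every coordinate is measurable and
   every linear combination is real Gaussian with the induced mean/variance. *)
Definition gaussian_vector {R : realType} {T : finType} {d : measure_display}
  {Omega : measurableType d} (P : probability Omega R) (F : Omega -> T -> R)
  (m : T -> R) (C : T -> T -> R) : Prop :=
  (forall x, measurable_fun setT (fun w => F w x)) /\
  (forall (a : T -> R) (A : set R), measurable A ->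
     P ((fun w => \sum_x a x * F w x) @^-1` A) =
     gauss_law (\sum_x a x * m x) (\sum_x \sum_y a x * C x y * a y) A).

From mathcomp Require Import all_boot all_order all_algebra.
From mathcomp Require Import all_classical all_reals all_analysis.
From mathcomp Require Import measurable_realfun ring lra.
Import Order.TTheory GRing.Theory Num.Theory.
Local Open Scope classical_set_scope.
Local Open Scope ring_scope.

(* Write [s = beta_t sigma_fb[t]] for the standard deviation of the sample
   [f_t].  With probability at least [p] the sample is optimistic at [xstar],
   i.e. [f_t(xstar) >= mu(xstar) + s(xstar)], because the normal density is
   at least [peak * e^(-9/8)] on [[mu + s, mu + 3s/2]].  By the Gaussian tail
   bound and a union bound over [X], with probability at least [1 - 1/t^2] no
   coordinate overshoots, i.e. [f_t(x) <= mu(x) + q s(x)] with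
   [q = sqrt(2 log(|X| t^2))].  On both events, [E^f(t)] and the maximality
   of [x_t] give
     [f(xstar) <= mu(xstar) + s(xstar) <= f_t(xstar) <= f_t(x_t)
               <= mu(x_t) + q s(x_t) <= f(x_t) + (1 + q) s(x_t)],
   so [x_t] is not saturated since [c_t = beta_t (1 + q)]. *)

Section normal_bounds.
Context (R : realType).
Implicit Types (m s a v y : R).

Lemma normal_pdf_le_shift m s a y : 0 < s -> 0 <= a -> m + a * s < y ->
  normal_pdf m s y <= expR (- (a ^+ 2 / 2)) * normal_pdf (m + a * s) s y.
Proof.
move=> s0 a0 hy; have sN0 : s != 0 by rewrite gt_eqF.
rewrite !normal_pdfE // mulrCA ler_wpM2l ?normal_peak_ge0 // /normal_fun.
rewrite -expRD ler_expR -subr_ge0.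
have -> : - (a ^+ 2 / 2) + - (y - (m + a * s)) ^+ 2 / (s ^+ 2 *+ 2)
          - - (y - m) ^+ 2 / (s ^+ 2 *+ 2) = a * (y - (m + a * s)) / s.
  by rewrite -mulr_natr; field.
by rewrite divr_ge0 ?(ltW s0) // mulr_ge0 // subr_ge0 ltW.
Qed.

Lemma normal_prob_tail_le m s a : 0 < s -> 0 <= a ->
  (normal_prob m s `](m + a * s)%R, +oo[%classic
    <= (expR (- (a ^+ 2 / 2)))%:E)%E.
Proof.
move=> s0 a0; set A := `](m + a * s)%R, +oo[%classic.
have mA : measurable A := measurable_itv _.
have mpdf m' : measurable_fun A (EFin \o normal_pdf m' s).
  by apply/measurable_EFinP; exact: measurable_funTS (measurable_normal_pdf _ _).
apply: (@le_trans _ _ ((expR (- (a ^+ 2 / 2)))%:E * normal_prob (m + a * s) s A)%E).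
  rewrite /normal_prob -ge0_integralZl //; [|exact: mpdf|].
  - apply: ge0_le_integral => //.
    + by move=> y _; rewrite lee_fin normal_pdf_ge0.
    + exact: mpdf.
    + exact: measurable_funeM (mpdf _).
    + move=> y; rewrite /A /= in_itv /= andbT => hy.
      by rewrite -EFinM lee_fin normal_pdf_le_shift.
  - by move=> y _; rewrite lee_fin normal_pdf_ge0.
by rewrite -[leRHS]mule1 lee_pmul2l ?lte_fin ?expR_gt0 // probability_le1.
Qed.

Lemma normal_pdf_ge_on_itv m s y : 0 < s -> m + s <= y <= m + s * (3 / 2) ->
  normal_peak s * expR (- (9 / 8)) <= normal_pdf m s y.
Proof.
move=> s0 /andP[ys1 ys2]; have sN0 : s != 0 by rewrite gt_eqF.
rewrite normal_pdfE // ler_wpM2l ?normal_peak_ge0 // /normal_fun ler_expR.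
rewrite mulNr lerN2 ler_pdivrMr ?mulrn_wgt0 ?exprn_gt0 //.
have -> : 9 / 8 * (s ^+ 2 *+ 2) = (s * (3 / 2)) ^+ 2 by rewrite -mulr_natr; field.
by rewrite ler_sqr ?nnegrE; lra.
Qed.

(* [normal_peak s * (s / 2) = 1 / (2 sqrt (2 pi))], and the claim reduces to
   [expR (- 1 / 4) >= 1 / 2], which follows from [expR x >= 1 + x]. *)
Lemma p_const_le_normal_mass s : 0 < s ->
  p_const R <= normal_peak s * expR (- (9 / 8)) * (s / 2).
Proof.
move=> s0.
have q_gt0 : 0 < Num.sqrt (pi : R) by rewrite sqrtr_gt0 pi_gt0.
have r2_gt0 : 0 < Num.sqrt (2 : R) by rewrite sqrtr_gt0.
have e_gt0 : 0 < expR (1 : R) := expR_gt0 _.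
set q := Num.sqrt (pi : R) in q_gt0 *; set r2 := Num.sqrt (2 : R) in r2_gt0 *.
set e := expR (1 : R) in e_gt0 *; set e8 := expR (- (1 / 8) : R).
have e8_sqr : 3 / 4 <= e8 ^+ 2.
  by rewrite /e8 -expRM_natr; apply: le_trans (expR_ge1Dx _); lra.
have e8_ge0 : 0 <= e8 by exact: expR_ge0.
have r2_sqr : r2 ^+ 2 = 2 by rewrite /r2 sqr_sqrtr.
have r2_le : r2 <= 2 * e8 by nra.
have -> : expR (- (9 / 8)) = e^-1 * e8.
  by rewrite /e /e8 -expRN -expRD; congr expR; lra.
have -> : normal_peak s = (s * q * r2)^-1.
  rewrite /normal_peak -mulr_natr; congr (_^-1).
  rewrite sqrtrM; last by rewrite mulr_ge0 ?sqr_ge0 ?pi_ge0.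
  by rewrite sqrtrM ?sqr_ge0 // sqrtr_sqr gtr0_norm.
rewrite /p_const -/e -/q.
have -> : (s * q * r2)^-1 * (e^-1 * e8) * (s / 2) = (2 * e8) / (4 * e * q * r2).
  by field; rewrite !gt_eqF.
have -> : (4 * e * q)^-1 = r2 / (4 * e * q * r2) by field; rewrite !gt_eqF.
by rewrite ler_pM2r // invr_gt0 !mulr_gt0.
Qed.

Lemma p_const_le_normal_prob m s : 0 < s ->
  ((p_const R)%:E <= normal_prob m s `[(m + s)%R, +oo[%classic)%E.
Proof.
move=> s0; set I := `[m + s, m + s * (3 / 2)]%classic.
have mI : measurable I := measurable_itv _.
have lenI : lebesgue_measure I = (s / 2)%:E.
  rewrite lebesgue_measure_itv /= lte_fin ifT; last by rewrite ltrD2l; nra.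
  by rewrite -EFinB; congr EFin; field.
apply: (@le_trans _ _ (normal_prob m s I)); last first.
  apply: le_measure; rewrite ?inE // => y /=.
  by rewrite !in_itv /= andbT => /andP[].
apply: (@le_trans _ _
  (\int[lebesgue_measure]_(y in I) (normal_peak s * expR (- (9 / 8)))%:E)%E).
  rewrite integral_cst // [X in (_ * X)%E](_ : _ = (s / 2)%:E); last exact: lenI.
  by rewrite -EFinM lee_fin p_const_le_normal_mass.
apply: ge0_le_integral => //.
- by move=> y _; rewrite lee_fin mulr_ge0 ?normal_peak_ge0 ?expR_ge0.
- by apply/measurable_EFinP; exact: measurable_funTS (measurable_normal_pdf _ _).
- by move=> y; rewrite /I /= in_itv /= lee_fin => /normal_pdf_ge_on_itv; apply.
Qed.

Lemma p_const_le1 : p_const R <= 1.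
Proof.
rewrite /p_const invf_le1; last by rewrite !mulr_gt0 ?expR_gt0 ?sqrtr_gt0 ?pi_gt0.
have e_ge1 : 1 <= expR (1 : R) by apply: le_trans (expR_ge1Dx _); lra.
have sqrt_pi_ge1 : 1 <= Num.sqrt (pi : R).
  by rewrite -sqrtr1 ler_sqrt ?pi_gt0 //; apply: le_trans (pi_ge2 R); lra.
nra.
Qed.

Lemma gauss_law_tail_le m v a : 0 <= a ->
  (gauss_law m v `](m + a * Num.sqrt v)%R, +oo[%classic
    <= (expR (- (a ^+ 2 / 2)))%:E)%E.
Proof.
rewrite /gauss_law; case: ifPn => [v0 a0|].
  by rewrite normal_prob_tail_le ?sqrtr_gt0.
rewrite -leNgt -sqrtr_eq0 => /eqP -> _.
rewrite mulr0 addr0 diracE memNset ?lee_fin ?expR_ge0 //.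
by rewrite /= in_itv /= ltxx.
Qed.

Lemma p_const_le_gauss_law m v :
  ((p_const R)%:E <= gauss_law m v `[(m + Num.sqrt v)%R, +oo[%classic)%E.
Proof.
rewrite /gauss_law; case: ifPn => [v0|].
  by rewrite p_const_le_normal_prob ?sqrtr_gt0.
rewrite -leNgt -sqrtr_eq0 => /eqP ->.
rewrite addr0 diracE mem_set ?lee_fin ?p_const_le1 //.
by rewrite /= in_itv /= lexx.
Qed.

End normal_bounds.

Lemma sumr_indicator_mul {T : finType} {R : pzSemiRingType} (g : T -> R) x :
  \sum_y (y == x)%:R * g y = g x.
Proof.
by rewrite (bigD1 x) //= eqxx mul1r big1 ?addr0 // => y /negbTE ->; rewrite mul0r.
Qed.

Lemma gaussian_vector_coord {R : realType} {T : finType} {d : measure_display}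
    {Omega : measurableType d} {P : probability Omega R} {F : Omega -> T -> R}
    {m : T -> R} {C : T -> T -> R} :
  gaussian_vector P F m C -> forall x A, measurable A ->
  P ((F^~ x) @^-1` A) = gauss_law (m x) (C x x) A.
Proof.
case=> _ law x A mA; have := law (fun y => (y == x)%:R) A mA.
rewrite sumr_indicator_mul.
under eq_bigr => y _ do under eq_bigr => z _ do rewrite [_ * (z == x)%:R]mulrC.
under eq_bigr => y _ do rewrite sumr_indicator_mul.
rewrite sumr_indicator_mul => <-; congr (P (_ @^-1` A)).
by apply/funext => w; rewrite sumr_indicator_mul.
Qed.

Lemma measurable_preimage_finType {d : measure_display} {Omega : measurableType d}
    {T : finType} (g : Omega -> T) (S : set T) :
  (forall z, measurable (g @^-1` [set z])) -> measurable (g @^-1` S).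
Proof.
move=> mg; have -> : g @^-1` S = \bigcup_(z in S) g @^-1` [set z].
  by apply/seteqP; split => [w Sw|w [z Sz /= ->]] //; exists (g w).
by apply: fin_bigcup_measurable => //; exact: finite_finset.
Qed.

Lemma le_measure_bigsetU_seq {R : realType} {d : measure_display} {X : measurableType d}
    (mu : {measure set X -> \bar R}) {I : Type} (s : seq I) (F : I -> set X) :
  (forall i, measurable (F i)) ->
  (mu (\big[setU/set0]_(i <- s) F i) <= \sum_(i <- s) mu (F i))%E.
Proof.
move=> mF; elim: s => [|i s IH]; first by rewrite !big_nil measure0.
rewrite !big_cons; apply: le_trans (measureU2 _ _ _) _ => //.
  exact: bigsetU_measurable.
exact: leeD.
Qed.

Lemma le_measure_subsetU {R : realType} {d : measure_display} {X : measurableType d}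
    (mu : {measure set X -> \bar R}) {A B C : set X} :
  measurable A -> measurable B -> measurable C -> A `<=` B `|` C ->
  (mu A <= mu B + mu C)%E.
Proof.
move=> mA mB mC sub; apply: le_trans (measureU2 _ mB mC).
by apply: le_measure; rewrite ?inE //; exact: measurableU.
Qed.

Section sample_events.
Context {R : realType} {T : finType} {d : measure_display} {Omega : measurableType d}.
Variables (F : Omega -> T -> R) (m s : T -> R).

Definition optimistic_at (x : T) : set Omega :=
  (F^~ x) @^-1` `[(m x + s x)%R, +oo[%classic.

Definition overshoot (a : R) : set Omega :=
  \big[setU/set0]_(x <- index_enum T) (F^~ x) @^-1` `](m x + a * s x)%R, +oo[%classic.

End sample_events.

Lemma optimistic_sub_gap_le_or_overshoot {R : realType} {T : finType}
    {d : measure_display} {Omega : measurableType d} {F : Omega -> T -> R}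
    {m s f : T -> R} {xstar : T} {xt : Omega -> T} (a : R) :
  (forall x, `|m x - f x| <= s x) -> (forall w x, F w x <= F w (xt w)) ->
  optimistic_at F m s xstar `<=`
    [set w | f xstar - f (xt w) <= (1 + a) * s (xt w)] `|` overshoot F m s a.
Proof.
move=> conf argmax w; rewrite /optimistic_at /= in_itv /= andbT => opt_w.
have [|not_over] := pselect (overshoot F m s a w); [by right | left => /=].
have sample_le : F w (xt w) <= m (xt w) + a * s (xt w).
  rewrite leNgt; apply/negP => sample_gt; apply: not_over.
  rewrite /overshoot -bigcup_seq; exists (xt w); first exact: mem_index_enum.
  by rewrite /= in_itv /= sample_gt.
have := conf (xt w); have := conf xstar; rewrite !ler_norml.
move=> /andP[conf_star _] /andP[_ conf_xt].
have := argmax w xstar; rewrite mulrDl mul1r; lra.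
Qed.

Section gaussian_sample_events.
Context {R : realType} {T : finType} {d : measure_display} {Omega : measurableType d}.
Context {P : probability Omega R} {F : Omega -> T -> R} {m : T -> R} {C : T -> T -> R}.
Hypothesis gaussF : gaussian_vector P F m C.

Let sd x := Num.sqrt (C x x).

Let measurable_coord x A : measurable A -> measurable ((F^~ x) @^-1` A).
Proof.
by move=> mA; rewrite -[_ @^-1` _]setTI; exact: gaussF.1 x measurableT A mA.
Qed.

Lemma measurable_optimistic_at x : measurable (optimistic_at F m sd x).
Proof. by apply: measurable_coord; exact: measurable_itv. Qed.

Lemma measurable_overshoot a : measurable (overshoot F m sd a).
Proof.
by apply: bigsetU_measurable => x _; apply: measurable_coord; exact: measurable_itv.
Qed.

Lemma p_const_le_prob_optimistic_at x :
  ((p_const R)%:E <= P (optimistic_at F m sd x))%E.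
Proof.
rewrite /optimistic_at (gaussian_vector_coord gaussF) ?measurable_itv //.
exact: p_const_le_gauss_law.
Qed.

Lemma prob_overshoot_le a : 0 <= a ->
  (P (overshoot F m sd a) <= (#|T|%:R * expR (- (a ^+ 2 / 2)))%:E)%E.
Proof.
move=> a_ge0; apply: le_trans (le_measure_bigsetU_seq P _ _ _) _.
  by move=> x; apply: measurable_coord; exact: measurable_itv.
apply: le_trans (_ : \sum_(x <- index_enum T) (expR (- (a ^+ 2 / 2)))%:E <= _)%E.
  apply: lee_sum => x _; rewrite /= (gaussian_vector_coord gaussF) ?measurable_itv //.
  exact: gauss_law_tail_le.
by rewrite sumEFin sumr_const mulr_natl.
Qed.

End gaussian_sample_events.

Lemma beta_t_gt0 {R : realType} {T : finType} {t : nat} {delta : R} :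
  (0 < #|T|)%N -> (0 < t)%N -> 0 < delta < 1 -> 0 < beta_t T t delta.
Proof.
move=> T_gt0 t_gt0 /andP[delta_gt0 delta_lt1].
have T_ge1 : 1 <= #|T|%:R :> R by rewrite ler1n.
have t2_ge1 : 1 <= t%:R ^+ 2 :> R by rewrite exprn_ege1 // ler1n.
have pi2_ge4 : 4 <= (pi : R) ^+ 2 by have := pi_ge2 R; nra.
have pi2t2_ge4 : 4 <= pi ^+ 2 * t%:R ^+ 2 :> R by nra.
have pi2t2T_ge4 : 4 <= pi ^+ 2 * t%:R ^+ 2 * #|T|%:R :> R by nra.
rewrite /beta_t mulr_gt0 // ln_gt0 // ltr_pdivlMr ?mulr_gt0 // mul1r.
lra.
Qed.

Lemma mul_expR_half_sqr_sqrt_2ln {R : realType} (c u : R) : 0 < c -> 1 <= c * u ->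
  c * expR (- (Num.sqrt (2 * ln (c * u)) ^+ 2 / 2)) = u^-1.
Proof.
move=> c_gt0 cu_ge1; rewrite sqr_sqrtr ?mulr_ge0 ?ln_ge0 //.
rewrite [2 * _]mulrC mulfK ?pnatr_eq0 // expRN lnK ?posrE; last lra.
by rewrite invfM mulrA mulfV ?mul1r ?gt_eqF.
Qed.

Theorem lemma4 (R : realType) (T : finType)
  (k : T -> T -> R) (hk : psd_kernel k)
  (sig : R) (hsig : 0 < sig)
  (t : nat) (ht : (0 < t)%N) (delta : R) (hdelta : 0 < delta < 1)
  (n : nat) (hn : (n < t)%N) (xs : 'I_n -> T) (ys : 'I_n -> R)
  (f : T -> R) (xstar : T) (hxstar : forall x, f x <= f xstar)
  (hE : forall x, `|post_mean k (sig ^+ 2) xs ys x - f x|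
                  <= beta_t T t delta * post_sd k (sig ^+ 2) xs x)
  (d : measure_display) (Omega : measurableType d) (P : probability Omega R)
  (ft : Omega -> T -> R)
  (hft : gaussian_vector P ft (post_mean k (sig ^+ 2) xs ys)
           (fun x y => beta_t T t delta ^+ 2 * post_cov k (sig ^+ 2) xs x y))
  (xt : Omega -> T) (hxt_max : forall w x, ft w x <= ft w (xt w))
  (hxt_meas : forall x, measurable (xt @^-1` [set x])) :
  ((p_const R - (t%:R ^+ 2)^-1)%:E <=
    P [set w | ~ (f xstar - f (xt w) >
                  c_t T t delta * post_sd k (sig ^+ 2) xs (xt w))%R])%E.
Proof.
set mu := post_mean _ _ _ _ in hE hft *; set sd := post_sd _ _ _ in hE *.
set be := beta_t T t delta in hE hft *; set C := fun x y => be ^+ 2 * _ in hft.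
pose q : R := Num.sqrt (2 * ln (#|T|%:R * t%:R ^+ 2)).
have T_gt0 : (0 < #|T|)%N by apply/card_gt0P; exists xstar.
have be_gt0 : 0 < be := beta_t_gt0 T_gt0 ht hdelta.
have sd_scaled : (fun x => Num.sqrt (C x x)) = (fun x => be * sd x).
  by apply/funext => x; rewrite sqrtrM ?sqr_ge0 // sqrtr_sqr gtr0_norm.
have P_opt := p_const_le_prob_optimistic_at hft xstar.
have P_over := prob_overshoot_le hft q (sqrtr_ge0 _).
have meas_opt := measurable_optimistic_at hft xstar.
have meas_over := measurable_overshoot hft q.
rewrite sd_scaled in P_opt P_over meas_opt meas_over.
have N_ge1 : 1 <= #|T|%:R * t%:R ^+ 2 :> R by rewrite mulr_ege1 ?exprn_ege1 ?ler1n.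
rewrite mul_expR_half_sqr_sqrt_2ln ?ltr0n // in P_over.
set unsat := [set w | ~ _].
have opt_sub : optimistic_at ft mu (fun x => be * sd x) xstar `<=`
    unsat `|` overshoot ft mu (fun x => be * sd x) q.
  move=> w /(optimistic_sub_gap_le_or_overshoot q hE hxt_max) [gap_le|].
    left; apply/negP; rewrite -leNgt.
    rewrite (_ : c_t T t delta * _ = (1 + q) * (be * sd (xt w))) //.
    by rewrite /c_t -/be -/q; ring.
  by right.
rewrite EFinB leeBlDr //; apply: le_trans P_opt (le_trans _ (leeD (lexx _) P_over)).
apply: le_measure_subsetU meas_opt _ meas_over opt_sub.
exact: (measurable_preimage_finType xt
  [set z | ~ (c_t T t delta * sd z < f xstar - f z)] hxt_meas).
Qed.
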